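(* Let $\alpha\in\mathbb{C}$, $\beta\in\mathbb{C}\setminus\mathbb{Z}$, and let $D\in\mathrm{Der}(\mathcal{W},\mathcal{F}_\alpha\otimes\mathcal{F}_\beta)_0$ satisfy $D(L_0)=0$, $D(L_1)=c\,v_{l+1}\otimes v_{-l}$ for some $l\in\mathbb{Z}$ and $c\in\mathbb{C}$, and $D(L_{-1})=0$. Then $D=0$.
   Context: The Witt algebra $\mathcal{W}$ has basis $\{L_n\mid n\in\mathbb{Z}\}$ and bracket $[L_m,L_n]=(m-n)L_{m+n}$. $\mathcal{F}_\alpha$ has basis $\{v_n\}$ with $L_m\cdot v_n=-(\alpha m+n)v_{m+n}$; $\mathcal{F}_\alpha\otimes\mathcal{F}_\beta$ is a $\mathcal{W}$-module via $L_m\cdot(v_i\otimes v_j)=-(i+\alpha m)v_{m+i}\otimes v_j-(j+\beta m)v_i\otimes v_{m+j}$, graded by $(\mathcal{F}_\alpha\otimes\mathcal{F}_\beta)_k=\bigoplus_i\mathbb{C}\,v_i\otimes v_{k-i}$. $\mathrm{Der}(\mathcal{W},\mathcal{F}_\alpha\otimes\mathcal{F}_\beta)_0$ is the space of linear maps $D$ with $D([x,y])=x\cdot D(y)-y\cdot D(x)$ and $D(L_m)\in(\mathcal{F}_\alpha\otimes\mathcal{F}_\beta)_m$ for all $m$. *)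

From HB Require Import structures.
From mathcomp Require Import all_boot all_order all_algebra.
From mathcomp Require Import complex.
From mathcomp Require Import reals.
Set Implicit Arguments. Unset Strict Implicit. Unset Printing Implicit Defensive.
Import Order.TTheory GRing.Theory Num.Theory.
Local Open Scope ring_scope.
Local Open Scope complex_scope.

(* An element of F_alpha (x) F_beta is written as its coefficient function
   t : int -> int -> C, where t i j is the coefficient of v_i (x) v_j;
   genuine elements are the finitely supported ones. *)
Definition tens (R : realType) := int -> int -> R[i].

Definition fin_supp (R : realType) (t : tens R) : Prop :=
  exists s : seq (int * int), forall i j, t i j != 0 -> (i, j) \in s.

Definition graded (R : realType) (k : int) (t : tens R) : Prop :=
  forall i j, t i j != 0 -> i + j = k.

(* The action L_m . t, coefficientwise:
   L_m (v_a (x) v_b) = -(a + alpha m) v_{m+a} (x) v_b - (b + beta m) v_a (x) v_{m+b}. *)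
Definition act (R : realType) (alpha beta : R[i]) (m : int) (t : tens R) : tens R :=
  fun i j =>
    - (((i - m)%:~R + alpha * m%:~R) * t (i - m) j)
    - ((j - m)%:~R + beta * m%:~R) * t i (j - m).

(* A linear map D : W -> F_alpha (x) F_beta is given by its values D m = D(L_m)
   on the basis {L_m}. *)
Definition is_der0 (R : realType) (alpha beta : R[i]) (D : int -> tens R) : Prop :=
  (forall m, fin_supp (D m) /\ graded m (D m)) /\
  (forall m n i j,
      (m - n)%:~R * D (m + n) i j = act alpha beta m (D n) i j - act alpha beta n (D m) i j).

Definition simple_tens (R : realType) (c : R[i]) (a b : int) : tens R :=
  fun i j => if (i == a) && (j == b) then c else 0.

(* The relations [L_{-1}, L_{n+1}] = -(n+2) L_n and [L_1, L_{n-1}] = (2-n) L_n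
   show that D(L_{n+1}) (resp. D(L_{n-1})) is killed by L_{-1} (resp. L_1) as
   soon as D(L_n) = 0. On finitely supported tensors L_{+-1} act injectively
   when beta is not an integer: at an extremal first index the action reduces
   to multiplication by j -+ beta on the second factor. Starting from
   D(L_0) = D(L_{-1}) = 0, induction in both directions gives D = 0; the
   value of D(L_1) is thereby forced to be 0 as well. *)
From HB Require Import structures.
From mathcomp Require Import all_boot all_order all_algebra.
From mathcomp Require Import complex.
From mathcomp Require Import reals.
From mathcomp Require Import zify ring.
Set Implicit Arguments. Unset Strict Implicit. Unset Printing Implicit Defensive.
Import Order.TTheory GRing.Theory Num.Theory.
Local Open Scope ring_scope.
Local Open Scope complex_scope.

Lemma seq_lbound {T : eqType} (f : T -> int) (s : seq T) :
  exists N : int, forall x, x \in s -> N <= f x.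
Proof.
elim: s => [|y s [N HN]]; first by exists 0.
exists (Num.min (f y) N) => x; rewrite inE => /orP [/eqP -> | /HN fxN].
  by rewrite ge_min lexx.
by rewrite ge_min fxN orbT.
Qed.

Section Action.

Variables (R : realType) (alpha beta : R[i]).

Lemma act_zero (m : int) (t : tens R) :
  (forall i j, t i j = 0) -> forall i j, act alpha beta m t i j = 0.
Proof. by move=> t0 i j; rewrite /act !t0; ring. Qed.

(* Induction on m * i over the support: the term t (i - m) j' in the action
   lies strictly below t i j in this order. *)
Lemma act_inj (m : int) (t : tens R) :
  (forall k : int, beta * m%:~R != k%:~R) -> fin_supp t ->
  (forall i j, act alpha beta m t i j = 0) -> forall i j, t i j = 0.
Proof.
move=> hbm [s supp_s] tm0.
have m_neq0 : m != 0 by apply: contra_neq (hbm 0) => ->; rewrite mulr0.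
have [N HN] := seq_lbound (fun p : int * int => m * p.1) s.
have below : forall i j, m * i < N -> t i j = 0.
  move=> i j lt_iN; apply/eqP; apply: contraTT lt_iN => /supp_s /HN.
  by rewrite -leNgt.
have step : forall i, (forall j, t (i - m) j = 0) -> forall j, t i j = 0.
  move=> i tim0 j; have /eqP := tm0 i (j + m).
  rewrite /act addrK tim0 mulr0 oppr0 sub0r oppr_eq0 mulf_eq0.
  case/orP=> [|/eqP //]; rewrite addr_eq0 => /eqP bmj.
  by move: (hbm (- j)); rewrite mulrNz bmj opprK eqxx.
have bounded : forall n : nat, forall i j, m * i < N + n%:Z -> t i j = 0.
  elim=> [|n IHn] i j lt_iN; first by apply: below; rewrite addr0 in lt_iN.
  apply: step => j'; apply: IHn.
  have : 1 <= m * m by nia.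
  lia.
move=> i j; apply: (bounded (absz (m * i - N)%R).+1); lia.
Qed.

End Action.

Section Derivation.

Variables (R : realType) (alpha beta : R[i]).
Hypothesis hbeta : forall k : int, beta != k%:~R.
Variable D : int -> tens R.
Hypothesis hD : is_der0 alpha beta D.

Lemma der0_succ (n : int) :
  (forall i j, D (-1) i j = 0) -> (forall i j, D n i j = 0) ->
  forall i j, D (n + 1) i j = 0.
Proof.
move=> Dm1 Dn; case: hD => [fin_D der_D].
apply: (@act_inj R alpha beta (-1)); last 1 first.
- move=> i j; have := der_D (-1) (n + 1) i j.
  rewrite (_ : -1 + (n + 1) = n); last by rewrite addrC addrK.
  by rewrite Dn (act_zero _ _ _ Dm1) mulr0 subr0 => <-.
- by move=> k; rewrite mulrN1 eqr_oppLR -mulrNz; exact: hbeta.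
- exact: (fin_D _).1.
Qed.

Lemma der0_pred (n : int) :
  (forall i j, D 1 i j = 0) -> (forall i j, D n i j = 0) ->
  forall i j, D (n - 1) i j = 0.
Proof.
move=> D1 Dn; case: hD => [fin_D der_D].
apply: (@act_inj R alpha beta 1); last 1 first.
- move=> i j; have := der_D 1 (n - 1) i j.
  rewrite (_ : 1 + (n - 1) = n); last by rewrite addrC subrK.
  by rewrite Dn (act_zero _ _ _ D1) mulr0 subr0 => <-.
- by move=> k; rewrite mulr1; exact: hbeta.
- exact: (fin_D _).1.
Qed.

End Derivation.

Theorem lemmaL1p10 (R : realType) (alpha beta : R[i])
  (hbeta : forall k : int, beta != k%:~R)
  (D : int -> tens R) (hD : is_der0 alpha beta D)
  (l : int) (c : R[i])
  (h0 : forall i j, D 0 i j = 0)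
  (h1 : forall i j, D 1 i j = simple_tens c (l + 1) (- l) i j)
  (hm1 : forall i j, D (-1) i j = 0) :
  forall m i j, D m i j = 0.
Proof.
have D1 := der0_succ hbeta hD hm1 h0; rewrite add0r in D1.
case=> n.
- elim: n => [|n IHn]; first exact: h0.
  rewrite intS addrC; exact: (der0_succ hbeta hD hm1 IHn).
- rewrite NegzE; elim: n => [|n IHn]; first exact: hm1.
  rewrite intS opprD addrC; exact: (der0_pred hbeta hD D1 IHn).
Qed.
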